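(* Let $\mathsf{V}$ be the subvariety of $V(\mathsf{BCA})$ axiomatised, relative to $V(\mathsf{BCA})$, by the identity $J_2\neg x\approx\neg J_2x$. Then $\mathsf{V}$ coincides with the join $\mathsf{BA}\vee\mathsf{SL}$ in the lattice of subvarieties of $V(\mathsf{BCA})$.
   Context: $\mathbf{WK}^e$ is the three-element algebra on $\{0,\tfrac12,1\}$ of type $\langle\wedge,\vee,\neg,J_2,0,1\rangle$. Its operations are: - $\neg$ swaps $0,1$ and fixes $\tfrac12$; - $\wedge,\vee$ are Boolean on $\{0,1\}$ and return $\tfrac12$ whenever some argument is $\tfrac12$; - $J_2(1)=1$ and $J_2(\tfrac12)=J_2(0)=0$. $\mathsf{BCA}=ISP(\mathbf{WK}^e)$, and $V(\mathsf{BCA})=HSP(\mathbf{WK}^e)$ is the variety it generates. $\mathsf{BA}$ is the subvariety of $V(\mathsf{BCA})$ axiomatised relative to $V(\mathsf{BCA})$ by $J_2x\approx x$. $\mathsf{SL}$ is the subvariety axiomatised relative to $V(\mathsf{BCA})$ by $J_2x\approx 1$. *)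

Record Algebra := mkAlgebra {
  car : Type;
  a_meet : car -> car -> car;
  a_join : car -> car -> car;
  a_neg : car -> car;
  a_J2 : car -> car;
  a_zero : car;
  a_one : car }.

Definition is_hom (A B : Algebra) (f : car A -> car B) : Prop :=
  (forall x y, f (a_meet A x y) = a_meet B (f x) (f y)) /\
  (forall x y, f (a_join A x y) = a_join B (f x) (f y)) /\
  (forall x, f (a_neg A x) = a_neg B (f x)) /\
  (forall x, f (a_J2 A x) = a_J2 B (f x)) /\
  f (a_zero A) = a_zero B /\
  f (a_one A) = a_one B.

Definition injective {X Y : Type} (f : X -> Y) : Prop :=
  forall x y, f x = f y -> x = y.
Definition surjective {X Y : Type} (f : X -> Y) : Prop :=
  forall y, exists x, f x = y.

Definition prodAlg (I : Type) (B : I -> Algebra) : Algebra :=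
  {| car := forall i, car (B i);
     a_meet := fun x y i => a_meet (B i) (x i) (y i);
     a_join := fun x y i => a_join (B i) (x i) (y i);
     a_neg := fun x i => a_neg (B i) (x i);
     a_J2 := fun x i => a_J2 (B i) (x i);
     a_zero := fun i => a_zero (B i);
     a_one := fun i => a_one (B i) |}.

Definition AlgClass := Algebra -> Prop.

Definition Hop (K : AlgClass) : AlgClass := fun A =>
  exists B f, K B /\ is_hom B A f /\ surjective f.
Definition Sop (K : AlgClass) : AlgClass := fun A =>
  exists B f, K B /\ is_hom A B f /\ injective f.
Definition Pop (K : AlgClass) : AlgClass := fun A =>
  exists (I : Type) (B : I -> Algebra) (f : car A -> car (prodAlg I B)),
    (forall i, K (B i)) /\ is_hom A (prodAlg I B) f /\ injective f /\ surjective f.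

Definition HSP (K : AlgClass) : AlgClass := Hop (Sop (Pop K)).

Definition is_variety (K : AlgClass) : Prop :=
  (forall A, Hop K A -> K A) /\ (forall A, Sop K A -> K A) /\
  (forall A, Pop K A -> K A).

Definition var_join (K1 K2 : AlgClass) : AlgClass := fun A =>
  forall W : AlgClass, is_variety W ->
    (forall B, K1 B -> W B) -> (forall B, K2 B -> W B) -> W A.

Inductive term : Type :=
  | tVar : nat -> term
  | tMeet : term -> term -> term
  | tJoin : term -> term -> term
  | tNeg : term -> term
  | tJ2 : term -> term
  | tZero : term
  | tOne : term.

Fixpoint eval (A : Algebra) (v : nat -> car A) (t : term) : car A :=
  match t with
  | tVar n => v n
  | tMeet s u => a_meet A (eval A v s) (eval A v u)
  | tJoin s u => a_join A (eval A v s) (eval A v u)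
  | tNeg s => a_neg A (eval A v s)
  | tJ2 s => a_J2 A (eval A v s)
  | tZero => a_zero A
  | tOne => a_one A
  end.

Definition satisfies (A : Algebra) (s t : term) : Prop :=
  forall v : nat -> car A, eval A v s = eval A v t.

(** The three-element algebra WK^e on {0, 1/2, 1}. *)
Inductive three : Type := T0 | Th | T1.

Definition wk_neg (x : three) : three :=
  match x with T0 => T1 | Th => Th | T1 => T0 end.
Definition wk_meet (x y : three) : three :=
  match x, y with
  | Th, _ | _, Th => Th
  | T1, T1 => T1
  | _, _ => T0
  end.
Definition wk_join (x y : three) : three :=
  match x, y with
  | Th, _ | _, Th => Th
  | T0, T0 => T0
  | _, _ => T1
  end.
Definition wk_J2 (x : three) : three :=
  match x with T1 => T1 | _ => T0 end.

Definition WKe : Algebra :=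
  {| car := three; a_meet := wk_meet; a_join := wk_join; a_neg := wk_neg;
     a_J2 := wk_J2; a_zero := T0; a_one := T1 |}.

Definition VBCA : AlgClass := HSP (fun A => A = WKe).

Definition rel_axiomatised (s t : term) : AlgClass := fun A =>
  VBCA A /\ satisfies A s t.

Definition x0 : term := tVar 0.

Definition BA : AlgClass := rel_axiomatised (tJ2 x0) x0.
Definition SL : AlgClass := rel_axiomatised (tJ2 x0) tOne.

Definition Vneg : AlgClass := rel_axiomatised (tJ2 (tNeg x0)) (tNeg (tJ2 x0)).

(** If [J2] commutes with [¬], then, since [J2] preserves [∧] in WK^e, De Morgan makes
    [J2] an idempotent endomorphism of the [∧, ∨, ¬]-reduct, so its image is a quotient of
    [A] satisfying [J2 x ≈ x].  The map [x ↦ x ∧ 0] is likewise a retraction onto a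
    quotient satisfying [J2 x ≈ 1].  As [x ≈ J2 x ∨ (x ∧ 0)] holds in WK^e, the two maps
    separate points, so [A] is a subdirect product of an algebra in BA and one in SL.
    Conversely BA and SL satisfy [J2 ¬x ≈ ¬J2 x] (in SL because [0 ≈ J2 0 ≈ 1]), and the
    members of V(BCA) satisfying an identity form a variety by Tarski's HSP calculus. *)

From Stdlib Require Import IndefiniteDescription ProofIrrelevance FunctionalExtensionality.

Lemma sig_val_inj {T : Type} {P : T -> Prop} : injective (@proj1_sig T P).
Proof. exact (eq_sig_hprop (fun x => proof_irrelevance (P x))). Qed.

Lemma dependent_functional_choice {I : Type} {T : I -> Type} (R : forall i, T i -> Prop) :
  (forall i, exists x, R i x) -> exists g : forall i, T i, forall i, R i (g i).
Proof.
  intros H; exists (fun i => proj1_sig (constructive_indefinite_description _ (H i))).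
  intro i; exact (proj2_sig (constructive_indefinite_description _ (H i))).
Qed.

Lemma injective_comp {X Y Z : Type} (f : X -> Y) (g : Y -> Z) :
  injective f -> injective g -> injective (fun x => g (f x)).
Proof. intros Hf Hg x y E; exact (Hf _ _ (Hg _ _ E)). Qed.

Lemma surjective_comp {X Y Z : Type} (f : X -> Y) (g : Y -> Z) :
  surjective f -> surjective g -> surjective (fun x => g (f x)).
Proof.
  intros Hf Hg z; destruct (Hg z) as [y <-]; destruct (Hf y) as [x <-]; now exists x.
Qed.

Section Homomorphisms.
Variables (A B : Algebra) (f : car A -> car B).
Hypothesis Hf : is_hom A B f.

Lemma hom_meet x y : f (a_meet A x y) = a_meet B (f x) (f y).
Proof. apply Hf. Qed.
Lemma hom_join x y : f (a_join A x y) = a_join B (f x) (f y).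
Proof. apply Hf. Qed.
Lemma hom_neg x : f (a_neg A x) = a_neg B (f x).
Proof. apply Hf. Qed.
Lemma hom_J2 x : f (a_J2 A x) = a_J2 B (f x).
Proof. apply Hf. Qed.
Lemma hom_zero : f (a_zero A) = a_zero B.
Proof. apply Hf. Qed.
Lemma hom_one : f (a_one A) = a_one B.
Proof. apply Hf. Qed.

Lemma eval_hom v t : f (eval A v t) = eval B (fun n => f (v n)) t.
Proof.
  induction t; simpl;
    rewrite ?hom_meet, ?hom_join, ?hom_neg, ?hom_J2, ?hom_zero, ?hom_one; congruence.
Qed.

End Homomorphisms.

Ltac hom_rewrite H :=
  rewrite ?(hom_meet _ _ _ H), ?(hom_join _ _ _ H), ?(hom_neg _ _ _ H),
          ?(hom_J2 _ _ _ H), ?(hom_zero _ _ _ H), ?(hom_one _ _ _ H).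

Lemma hom_comp A B C f g :
  is_hom A B f -> is_hom B C g -> is_hom A C (fun x => g (f x)).
Proof. intros Hf Hg; repeat split; intros; hom_rewrite Hf; hom_rewrite Hg; reflexivity. Qed.

Lemma hom_proj I B i : is_hom (prodAlg I B) (B i) (fun x => x i).
Proof. repeat split. Qed.

Lemma hom_into_prod A I B (g : car A -> car (prodAlg I B)) :
  (forall i, is_hom A (B i) (fun x => g x i)) -> is_hom A (prodAlg I B) g.
Proof.
  intros Hg; repeat split; intros; apply functional_extensionality_dep; intro i;
    simpl; hom_rewrite (Hg i); reflexivity.
Qed.

Lemma eval_ext A v w t : (forall n, v n = w n) -> eval A v t = eval A w t.
Proof. intros H; induction t; simpl; congruence. Qed.

Lemma eval_prod I B w t i : eval (prodAlg I B) w t i = eval (B i) (fun n => w n i) t.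
Proof. induction t; simpl; congruence. Qed.

Lemma satisfies_prod I B s t :
  (forall i, satisfies (B i) s t) -> satisfies (prodAlg I B) s t.
Proof.
  intros H w; apply functional_extensionality_dep; intro i; rewrite !eval_prod; apply H.
Qed.

Lemma satisfies_sub A B f s t :
  is_hom A B f -> injective f -> satisfies B s t -> satisfies A s t.
Proof. intros Hf Hi H v; apply Hi; rewrite !(eval_hom _ _ _ Hf); apply H. Qed.

Lemma satisfies_image A B f s t :
  is_hom B A f -> surjective f -> satisfies B s t -> satisfies A s t.
Proof.
  intros Hf Hs H v.
  destruct (functional_choice (fun n b => f b = v n) (fun n => Hs (v n))) as [w Hw].
  rewrite (eval_ext _ v (fun n => f (w n)) s), (eval_ext _ v (fun n => f (w n)) t)
    by (intro n; now rewrite Hw).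
  rewrite <- !(eval_hom _ _ _ Hf); f_equal; apply H.
Qed.

Lemma hom_inverse A B e e' :
  is_hom A B e -> injective e -> (forall y, e (e' y) = y) -> is_hom B A e'.
Proof.
  intros He Hi He'; repeat split; intros; apply Hi; hom_rewrite He; rewrite !He'; reflexivity.
Qed.

Section ProductMaps.
Variables (I : Type) (A B : I -> Algebra) (f : forall i, car (A i) -> car (B i)).

Definition prod_map (x : car (prodAlg I A)) : car (prodAlg I B) := fun i => f i (x i).

Lemma hom_prod_map : (forall i, is_hom (A i) (B i) (f i)) -> is_hom _ _ prod_map.
Proof.
  intros Hf; apply hom_into_prod; intro i; exact (hom_comp _ _ _ _ _ (hom_proj I A i) (Hf i)).
Qed.

Lemma injective_prod_map : (forall i, injective (f i)) -> injective prod_map.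
Proof.
  intros Hf x y E; apply functional_extensionality_dep; intro i.
  exact (Hf i _ _ (equal_f_dep E i)).
Qed.

Lemma surjective_prod_map : (forall i, surjective (f i)) -> surjective prod_map.
Proof.
  intros Hf y; destruct (dependent_functional_choice _ (fun i => Hf i (y i))) as [x Hx].
  exists x; apply functional_extensionality_dep; exact Hx.
Qed.

End ProductMaps.

Record is_subuniverse (B : Algebra) (P : car B -> Prop) : Prop := {
  subuniverse_meet : forall x y, P x -> P y -> P (a_meet B x y);
  subuniverse_join : forall x y, P x -> P y -> P (a_join B x y);
  subuniverse_neg : forall x, P x -> P (a_neg B x);
  subuniverse_J2 : forall x, P x -> P (a_J2 B x);
  subuniverse_zero : P (a_zero B);
  subuniverse_one : P (a_one B) }.

Section Subalgebra.
Variables (B : Algebra) (P : car B -> Prop) (HP : is_subuniverse B P).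

Definition subalg : Algebra :=
  {| car := {x | P x};
     a_meet := fun x y => exist P _ (subuniverse_meet B P HP _ _ (proj2_sig x) (proj2_sig y));
     a_join := fun x y => exist P _ (subuniverse_join B P HP _ _ (proj2_sig x) (proj2_sig y));
     a_neg := fun x => exist P _ (subuniverse_neg B P HP _ (proj2_sig x));
     a_J2 := fun x => exist P _ (subuniverse_J2 B P HP _ (proj2_sig x));
     a_zero := exist P _ (subuniverse_zero B P HP);
     a_one := exist P _ (subuniverse_one B P HP) |}.

Lemma subalg_incl_hom : is_hom subalg B (@proj1_sig _ P).
Proof. repeat split. Qed.

End Subalgebra.

Lemma preimage_image_subuniverse A B C (f : car A -> car B) (h : car C -> car B) :
  is_hom A B f -> is_hom C B h -> is_subuniverse C (fun c => exists a, h c = f a).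
Proof.
  intros Hf Hh; constructor.
  - intros x y [a Ha] [b Hb]; exists (a_meet A a b); hom_rewrite Hf; hom_rewrite Hh; congruence.
  - intros x y [a Ha] [b Hb]; exists (a_join A a b); hom_rewrite Hf; hom_rewrite Hh; congruence.
  - intros x [a Ha]; exists (a_neg A a); hom_rewrite Hf; hom_rewrite Hh; congruence.
  - intros x [a Ha]; exists (a_J2 A a); hom_rewrite Hf; hom_rewrite Hh; congruence.
  - exists (a_zero A); hom_rewrite Hf; hom_rewrite Hh; reflexivity.
  - exists (a_one A); hom_rewrite Hf; hom_rewrite Hh; reflexivity.
Qed.

Lemma Hop_mono (K K' : AlgClass) : (forall B, K B -> K' B) -> forall A, Hop K A -> Hop K' A.
Proof. intros HK A [B [f [HB Hf]]]; exists B, f; auto. Qed.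

Lemma Sop_mono (K K' : AlgClass) : (forall B, K B -> K' B) -> forall A, Sop K A -> Sop K' A.
Proof. intros HK A [B [f [HB Hf]]]; exists B, f; auto. Qed.

Lemma Pop_prodAlg (K : AlgClass) I B : (forall i, K (B i)) -> Pop K (prodAlg I B).
Proof.
  intros HB; exists I, B, (fun x => x); repeat split; auto.
  - intros x y E; exact E.
  - intros y; now exists y.
Qed.

Lemma Hop_Hop K A : Hop (Hop K) A -> Hop K A.
Proof.
  intros [B [f [[C [g [HC [Hg Hgs]]]] [Hf Hfs]]]].
  exists C, (fun x => f (g x)); split; [exact HC|].
  split; [exact (hom_comp _ _ _ _ _ Hg Hf) | exact (surjective_comp _ _ Hgs Hfs)].
Qed.

Lemma Sop_Sop K A : Sop (Sop K) A -> Sop K A.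
Proof.
  intros [B [f [[C [g [HC [Hg Hgi]]]] [Hf Hfi]]]].
  exists C, (fun x => g (f x)); split; [exact HC|].
  split; [exact (hom_comp _ _ _ _ _ Hf Hg) | exact (injective_comp _ _ Hfi Hgi)].
Qed.

Lemma Sop_Hop K A : Sop (Hop K) A -> Hop (Sop K) A.
Proof.
  intros [B [f [[C [h [HC [Hh Hhs]]]] [Hf Hfi]]]].
  set (HS := preimage_image_subuniverse A B C f h Hf Hh).
  set (S := subalg C _ HS).
  destruct (functional_choice (fun (c : car S) a => h (proj1_sig c) = f a)
              (fun c => proj2_sig c)) as [p Hp].
  exists S, p; split; [|split].
  - exists C, (@proj1_sig _ _); split; [exact HC|].
    split; [apply subalg_incl_hom | apply sig_val_inj].
  - repeat split; intros; apply Hfi; rewrite <- Hp; hom_rewrite Hf; rewrite <- ?Hp;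
      simpl; hom_rewrite Hh; reflexivity.
  - intros a; destruct (Hhs (f a)) as [c Hc].
    exists (exist _ c (ex_intro _ a Hc)); apply Hfi; rewrite <- Hp; exact Hc.
Qed.

Lemma Pop_Sop K A : Pop (Sop K) A -> Sop (Pop K) A.
Proof.
  intros [I [B [e [HB [He [Hei _]]]]]].
  destruct (dependent_functional_choice (fun i (C : Algebra) =>
              exists f, K C /\ is_hom (B i) C f /\ injective f) HB) as [C HC].
  destruct (dependent_functional_choice (fun i (f : car (B i) -> car (C i)) =>
              K (C i) /\ is_hom (B i) (C i) f /\ injective f) HC) as [f Hf].
  exists (prodAlg I C), (fun x => prod_map I B C f (e x)); split; [|split].
  - apply Pop_prodAlg; intro i; apply Hf.
  - apply (hom_comp _ _ _ _ _ He), hom_prod_map; intro i; apply Hf.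
  - apply (injective_comp _ _ Hei), injective_prod_map; intro i; apply Hf.
Qed.

Lemma Pop_Hop K A : Pop (Hop K) A -> Hop (Pop K) A.
Proof.
  intros [I [B [e [HB [He [Hei Hes]]]]]].
  destruct (dependent_functional_choice (fun i (C : Algebra) =>
              exists h, K C /\ is_hom C (B i) h /\ surjective h) HB) as [C HC].
  destruct (dependent_functional_choice (fun i (h : car (C i) -> car (B i)) =>
              K (C i) /\ is_hom (C i) (B i) h /\ surjective h) HC) as [h Hh].
  destruct (functional_choice (fun y x => e x = y) Hes) as [e' He'].
  exists (prodAlg I C), (fun c => e' (prod_map I C B h c)); split; [|split].
  - apply Pop_prodAlg; intro i; apply Hh.
  - apply (hom_comp _ _ _ _ _ (hom_prod_map I C B h (fun i => proj1 (proj2 (Hh i))))).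
    exact (hom_inverse _ _ _ _ He Hei He').
  - apply (surjective_comp _ _ (surjective_prod_map I C B h (fun i => proj2 (proj2 (Hh i))))).
    intros a; exists (e a); apply Hei, He'.
Qed.

Lemma Pop_Pop K A : Pop (Pop K) A -> Pop K A.
Proof.
  intros [I [B [e [HB [He [Hei Hes]]]]]].
  destruct (dependent_functional_choice (fun i (J : Type) =>
              exists (C : J -> Algebra) (f : car (B i) -> car (prodAlg J C)),
              (forall j, K (C j)) /\ is_hom _ _ f /\ injective f /\ surjective f) HB)
    as [J HJ].
  destruct (dependent_functional_choice (fun i (C : J i -> Algebra) =>
              exists f : car (B i) -> car (prodAlg (J i) C),
              (forall j, K (C j)) /\ is_hom _ _ f /\ injective f /\ surjective f) HJ)
    as [C HC].
  destruct (dependent_functional_choice (fun i (f : car (B i) -> car (prodAlg (J i) (C i))) =>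
              (forall j, K (C i j)) /\ is_hom _ _ f /\ injective f /\ surjective f) HC)
    as [f Hf].
  exists {i : I & J i}, (fun p => C (projT1 p) (projT2 p)),
    (fun x p => f (projT1 p) (e x (projT1 p)) (projT2 p)).
  split; [|split; [|split]].
  - intros [i j]; apply Hf.
  - apply hom_into_prod; intros [i j]; simpl.
    exact (hom_comp _ _ _ _ _ (hom_comp _ _ _ _ _ He (hom_proj I B i))
             (hom_comp _ _ _ _ _ (proj1 (proj2 (Hf i))) (hom_proj _ _ j))).
  - intros x y E; apply Hei, functional_extensionality_dep; intro i.
    apply (proj1 (proj2 (proj2 (Hf i)))), functional_extensionality_dep; intro j.
    exact (equal_f_dep E (existT _ i j)).
  - intros z.
    destruct (dependent_functional_choice (fun i (b : car (B i)) =>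
                f i b = fun j => z (existT _ i j)) (fun i => proj2 (proj2 (proj2 (Hf i))) _))
      as [b Hb].
    destruct (Hes b) as [a Ha]; exists a.
    apply functional_extensionality_dep; intros [i j]; simpl; now rewrite Ha, Hb.
Qed.

Lemma HSP_variety K : is_variety (HSP K).
Proof.
  split; [|split]; intros A HA.
  - exact (Hop_Hop _ _ HA).
  - apply (Hop_mono _ _ (Sop_Sop _)), Sop_Hop, HA.
  - apply (Hop_mono _ _ (Sop_mono _ _ (Pop_Pop _))), (Hop_mono _ _ (Pop_Sop _)), Pop_Hop, HA.
Qed.

Lemma HSP_satisfies K A s t :
  (forall B, K B -> satisfies B s t) -> HSP K A -> satisfies A s t.
Proof.
  intros HK [B [f [[C [g [[I [D [e [HD [He [Hei _]]]]]] [Hg Hgi]]]] [Hf Hfs]]]].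
  apply (satisfies_image _ _ _ _ _ Hf Hfs), (satisfies_sub _ _ _ _ _ Hg Hgi).
  apply (satisfies_sub _ _ _ _ _ He Hei), satisfies_prod; intro i; apply HK, HD.
Qed.

Lemma variety_satisfying K s t :
  is_variety K -> is_variety (fun A => K A /\ satisfies A s t).
Proof.
  intros [KH [KS KP]]; split; [|split].
  - intros A [B [f [[HB HBs] [Hf Hfs]]]]; split.
    + apply KH; exists B, f; auto.
    + exact (satisfies_image _ _ _ _ _ Hf Hfs HBs).
  - intros A [B [f [[HB HBs] [Hf Hfi]]]]; split.
    + apply KS; exists B, f; auto.
    + exact (satisfies_sub _ _ _ _ _ Hf Hfi HBs).
  - intros A [I [B [e [HB [He [Hei Hes]]]]]]; split.
    + apply KP; exists I, B, e; split; [intro i; apply HB | auto].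
    + apply (satisfies_sub _ _ _ _ _ He Hei), satisfies_prod; intro i; apply HB.
Qed.

(* The hypotheses say that the kernel of [g] is a congruence; [retract] is the quotient
   by it, represented by the fixed points of [g]. *)
Section Retract.
Variables (A : Algebra) (g : car A -> car A).
Hypothesis g_idem : forall x, g (g x) = g x.
Hypothesis g_meet : forall x y, g (a_meet A x y) = g (a_meet A (g x) (g y)).
Hypothesis g_join : forall x y, g (a_join A x y) = g (a_join A (g x) (g y)).
Hypothesis g_neg : forall x, g (a_neg A x) = g (a_neg A (g x)).
Hypothesis g_J2 : forall x, g (a_J2 A x) = g (a_J2 A (g x)).

Definition retract : Algebra :=
  {| car := {x | g x = x};
     a_meet := fun x y => exist _ _ (g_idem (a_meet A (proj1_sig x) (proj1_sig y)));
     a_join := fun x y => exist _ _ (g_idem (a_join A (proj1_sig x) (proj1_sig y)));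
     a_neg := fun x => exist _ _ (g_idem (a_neg A (proj1_sig x)));
     a_J2 := fun x => exist _ _ (g_idem (a_J2 A (proj1_sig x)));
     a_zero := exist _ _ (g_idem (a_zero A));
     a_one := exist _ _ (g_idem (a_one A)) |}.

Definition retraction (x : car A) : car retract := exist _ (g x) (g_idem x).

Lemma retraction_hom : is_hom A retract retraction.
Proof. repeat split; intros; apply sig_val_inj; simpl; auto. Qed.

Lemma retraction_surjective : surjective retraction.
Proof. intros y; exists (proj1_sig y); apply sig_val_inj, (proj2_sig y). Qed.

End Retract.

Definition prod2 (A1 A2 : Algebra) : Algebra := prodAlg bool (fun b => if b then A1 else A2).

Lemma var_join_of_separating_homs (K1 K2 : AlgClass) A A1 A2 f1 f2 :
  K1 A1 -> K2 A2 -> is_hom A A1 f1 -> is_hom A A2 f2 ->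
  (forall x y, f1 x = f1 y -> f2 x = f2 y -> x = y) -> var_join K1 K2 A.
Proof.
  intros H1 H2 Hf1 Hf2 Hsep W [_ [WS WP]] K1W K2W.
  apply WS; exists (prod2 A1 A2),
    (fun (x : car A) (b : bool) => if b return car (if b then A1 else A2) then f1 x else f2 x).
  split; [|split].
  - apply WP, Pop_prodAlg; intros [|]; auto.
  - apply hom_into_prod; intros [|]; assumption.
  - intros x y E; apply Hsep; [exact (equal_f_dep E true) | exact (equal_f_dep E false)].
Qed.

Lemma VBCA_satisfies A s t : VBCA A -> satisfies WKe s t -> satisfies A s t.
Proof.
  intros HA HW; apply (HSP_satisfies (fun B => B = WKe)); [intros B -> | ]; assumption.
Qed.

(* Constants are matched before variables, so closed laws can be reified with the
   dummy variables [x = y = 0] (see [WKe_law0]). *)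
Ltac reify A x y e :=
  lazymatch e with
  | a_zero A => constr:(tZero)
  | a_one A => constr:(tOne)
  | x => constr:(tVar 0)
  | y => constr:(tVar 1)
  | a_meet A ?a ?b =>
      let s := reify A x y a in let t := reify A x y b in constr:(tMeet s t)
  | a_join A ?a ?b =>
      let s := reify A x y a in let t := reify A x y b in constr:(tJoin s t)
  | a_neg A ?a => let s := reify A x y a in constr:(tNeg s)
  | a_J2 A ?a => let s := reify A x y a in constr:(tJ2 s)
  end.

(* An identity in [x], [y] holds in every member of V(BCA) once it is checked on all
   valuations in WK^e. *)
Ltac WKe_law HA x y :=
  lazymatch type of HA with VBCA ?A =>
  lazymatch goal with |- ?l = ?r =>
    let s := reify A x y l in
    let t := reify A x y r in
    exact (VBCA_satisfies A s t HA
             ltac:(let v := fresh "v" in intro v; simpl; destruct (v 0), (v 1); reflexivity)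
             (fun n => match n with 0 => x | _ => y end))
  end end.

Ltac WKe_law0 HA :=
  lazymatch type of HA with VBCA ?A => WKe_law HA (a_zero A) (a_zero A) end.

Section VBCA_laws.
Variables (A : Algebra) (HA : VBCA A).

Lemma join_de_morgan x y : a_join A x y = a_neg A (a_meet A (a_neg A x) (a_neg A y)).
Proof. WKe_law HA x y. Qed.

Lemma neg_one : a_neg A (a_one A) = a_zero A.
Proof. WKe_law0 HA. Qed.

Lemma J2_zero : a_J2 A (a_zero A) = a_zero A.
Proof. WKe_law0 HA. Qed.

Lemma J2_idem x : a_J2 A (a_J2 A x) = a_J2 A x.
Proof. WKe_law HA x x. Qed.

Lemma J2_meet x y : a_J2 A (a_meet A x y) = a_meet A (a_J2 A x) (a_J2 A y).
Proof. WKe_law HA x y. Qed.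

Lemma J2_meet_zero x : a_meet A (a_J2 A x) (a_zero A) = a_meet A (a_one A) (a_zero A).
Proof. WKe_law HA x x. Qed.

Lemma meet_zero_idem x :
  a_meet A (a_meet A x (a_zero A)) (a_zero A) = a_meet A x (a_zero A).
Proof. WKe_law HA x x. Qed.

Lemma meet_zero_meet x y :
  a_meet A (a_meet A x y) (a_zero A) =
  a_meet A (a_meet A (a_meet A x (a_zero A)) (a_meet A y (a_zero A))) (a_zero A).
Proof. WKe_law HA x y. Qed.

Lemma meet_zero_join x y :
  a_meet A (a_join A x y) (a_zero A) =
  a_meet A (a_join A (a_meet A x (a_zero A)) (a_meet A y (a_zero A))) (a_zero A).
Proof. WKe_law HA x y. Qed.

Lemma meet_zero_neg x :
  a_meet A (a_neg A x) (a_zero A) = a_meet A (a_neg A (a_meet A x (a_zero A))) (a_zero A).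
Proof. WKe_law HA x x. Qed.

Lemma meet_zero_J2 x :
  a_meet A (a_J2 A x) (a_zero A) = a_meet A (a_J2 A (a_meet A x (a_zero A))) (a_zero A).
Proof. WKe_law HA x x. Qed.

Lemma J2_join_meet_zero x : x = a_join A (a_J2 A x) (a_meet A x (a_zero A)).
Proof. WKe_law HA x x. Qed.

End VBCA_laws.

Section Decomposition.
Variables (A : Algebra) (HA : VBCA A).
Hypothesis J2_neg : forall x, a_J2 A (a_neg A x) = a_neg A (a_J2 A x).

Lemma J2_join x y : a_J2 A (a_join A x y) = a_join A (a_J2 A x) (a_J2 A y).
Proof.
  rewrite (join_de_morgan A HA x y), J2_neg, (J2_meet A HA), !J2_neg.
  symmetry; apply (join_de_morgan A HA).
Qed.

Definition meet_zero (x : car A) : car A := a_meet A x (a_zero A).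

Definition Boolean_part : Algebra := retract A (a_J2 A) (J2_idem A HA).
Definition semilattice_part : Algebra := retract A meet_zero (meet_zero_idem A HA).

Lemma Boolean_retraction_hom :
  is_hom A Boolean_part (retraction A (a_J2 A) (J2_idem A HA)).
Proof.
  apply retraction_hom; intros;
    rewrite ?(J2_meet A HA), ?J2_join, ?J2_neg, ?(J2_idem A HA); reflexivity.
Qed.

Lemma semilattice_retraction_hom :
  is_hom A semilattice_part (retraction A meet_zero (meet_zero_idem A HA)).
Proof.
  apply retraction_hom;
    [apply meet_zero_meet | apply meet_zero_join | apply meet_zero_neg | apply meet_zero_J2];
    exact HA.
Qed.

Lemma Boolean_part_BA : BA Boolean_part.
Proof.
  split.
  - apply (proj1 (HSP_variety _)); exists A, (retraction A _ (J2_idem A HA)).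
    split; [exact HA | split; [apply Boolean_retraction_hom | apply retraction_surjective]].
  - intros v; apply sig_val_inj; simpl; rewrite (J2_idem A HA); exact (proj2_sig (v 0)).
Qed.

Lemma semilattice_part_SL : SL semilattice_part.
Proof.
  split.
  - apply (proj1 (HSP_variety _)); exists A, (retraction A _ (meet_zero_idem A HA)).
    split; [exact HA | split; [apply semilattice_retraction_hom | apply retraction_surjective]].
  - intros v; apply sig_val_inj; apply (J2_meet_zero A HA).
Qed.

Lemma var_join_BA_SL : var_join BA SL A.
Proof.
  apply (var_join_of_separating_homs BA SL A _ _ _ _ Boolean_part_BA semilattice_part_SL
           Boolean_retraction_hom semilattice_retraction_hom).
  intros x y E1 E2; apply (f_equal (@proj1_sig _ _)) in E1, E2; simpl in E1, E2.
  rewrite (J2_join_meet_zero A HA x), (J2_join_meet_zero A HA y); unfold meet_zero in E2.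
  congruence.
Qed.

End Decomposition.

Lemma Vneg_variety : is_variety Vneg.
Proof. exact (variety_satisfying _ _ _ (HSP_variety _)). Qed.

Lemma BA_Vneg B : BA B -> Vneg B.
Proof.
  intros [HB HJ]; split; [exact HB|].
  assert (J2_id : forall x, a_J2 B x = x) by (intro x; exact (HJ (fun _ => x))).
  intro v; simpl; rewrite !J2_id; reflexivity.
Qed.

Lemma SL_Vneg B : SL B -> Vneg B.
Proof.
  intros [HB HJ]; split; [exact HB|].
  assert (J2_one : forall x, a_J2 B x = a_one B) by (intro x; exact (HJ (fun _ => x))).
  intro v; simpl; rewrite !J2_one, (neg_one B HB), <- (J2_zero B HB), J2_one; reflexivity.
Qed.

Theorem corollary4p14 :
  forall A : Algebra, Vneg A <-> var_join BA SL A.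
Proof.
  intros A; split.
  - intros [HA HJ]; apply var_join_BA_SL; [exact HA | intro x; exact (HJ (fun _ => x))].
  - intros H; apply H; [exact Vneg_variety | exact BA_Vneg | exact SL_Vneg].
Qed.
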